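(* Let $\mathbf a=(a_i)$ and $\mathbf b=(b_i)$ be sequences in $\{0,1\}^{\mathbb N}$ with $a_1=0$ and $b_1=1$. Then: (1) $F(\mathbf a,\mathbf b)=\mathcal K(\sigma(\mathbf b),\sigma(\mathbf a))$; (2) $E(\mathbf a,\mathbf b)\cap[\sigma(\mathbf b),\sigma(\mathbf a)]=F(\mathbf a,\mathbf b)=\mathcal K(\sigma(\mathbf b),\sigma(\mathbf a))$; (3) $h_{top}(\mathcal K(\sigma(\mathbf b),\sigma(\mathbf a)),\sigma)=h_{top}(E(\mathbf a,\mathbf b),\sigma)$.
   Context: $\sigma$ denotes the left shift on $\{0,1\}^{\mathbb N}$ and $\prec,\preceq$ the lexicographic order; $[\mathbf x,\mathbf y]=\{\mathbf z\colon\mathbf x\preceq\mathbf z\preceq\mathbf y\}$. For $\mathbf t,\mathbf u\in\{0,1\}^{\mathbb N}$, $\mathcal K(\mathbf t,\mathbf u)=\{\mathbf x\colon\mathbf t\preceq\sigma^n(\mathbf x)\preceq\mathbf u\ \forall n\ge0\}$. $E(\mathbf a,\mathbf b)=\{\mathbf x\in\{0,1\}^{\mathbb N}\colon\text{for all }n\ge0,\ \sigma^n(\mathbf x)\preceq\mathbf a\text{ or }\mathbf b\preceq\sigma^n(\mathbf x)\}$. $F(\mathbf a,\mathbf b)=\{\mathbf x\in\{0,1\}^{\mathbb N}\colon\text{for all }n\ge0,\ \sigma(\mathbf b)\preceq\sigma^n(\mathbf x)\preceq\mathbf a\text{ or }\mathbf b\preceq\sigma^n(\mathbf x)\preceq\sigma(\mathbf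 a)\}$. $h_{top}$ is topological entropy. *)

From HB Require Import structures.
From mathcomp Require Import all_boot all_order all_algebra.
From mathcomp Require Import all_classical all_reals all_analysis.
Set Implicit Arguments. Unset Strict Implicit. Unset Printing Implicit Defensive.
Import Order.TTheory GRing.Theory Num.Theory.
Import numFieldNormedType.Exports.
Local Open Scope classical_set_scope.

(* One-sided binary sequences {0,1}^N; false = 0, true = 1.
   Index 0 corresponds to the paper's index 1 (a_1 = a 0). *)
Definition bitseqN := nat -> bool.

Definition lshift_seq (x : bitseqN) : bitseqN := fun i => x i.+1.

Definition lex_lt (x y : bitseqN) : Prop :=
  exists k, (forall i, (i < k)%N -> x i = y i) /\ x k = false /\ y k = true.

Definition lex_le (x y : bitseqN) : Prop := x = y \/ lex_lt x y.

Definition lex_interval (x y : bitseqN) : set bitseqN :=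
  [set z | lex_le x z /\ lex_le z y].

Definition Kset (t u : bitseqN) : set bitseqN :=
  [set x | forall n : nat, lex_le t (iter n lshift_seq x) /\ lex_le (iter n lshift_seq x) u].

Definition Eset (a b : bitseqN) : set bitseqN :=
  [set x | forall n : nat, lex_le (iter n lshift_seq x) a \/ lex_le b (iter n lshift_seq x)].

Definition Fset (a b : bitseqN) : set bitseqN :=
  [set x | forall n : nat,
     (lex_le (lshift_seq b) (iter n lshift_seq x) /\ lex_le (iter n lshift_seq x) a) \/
     (lex_le b (iter n lshift_seq x) /\ lex_le (iter n lshift_seq x) (lshift_seq a))].

Definition language (n : nat) (X : set bitseqN) : {set n.-tuple bool} :=
  [set w : n.-tuple bool |
     `[< exists x, exists m, X x /\ forall i : 'I_n, x (m + i)%N = tnth w i >]].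

(* topological entropy of the lshift_seq restricted to X (a subshift):
   lim_n (1/n) log #B_n(X), with the convention log of max(1, .) so that the
   empty set has entropy 0. *)
Definition htop (R : realType) (X : set bitseqN) : R :=
  limn (fun n : nat => (ln ((maxn 1 #|language n X|)%:R : R) / n%:R)%R).

From mathcomp Require Import all_boot all_order all_algebra.
From mathcomp Require Import all_classical all_reals all_analysis.
From mathcomp Require Import lra zify.
Import Order.TTheory GRing.Theory Num.Theory.
Import numFieldNormedType.Exports.
Set Implicit Arguments. Unset Strict Implicit.
Local Open Scope classical_set_scope.

(* Because a starts with 0 and b with 1, we have a <= σa and σb <= b, and
   z <= a implies σz <= σa while b <= z implies σb <= σz.  Hence a point
   of [σb, σa] lying outside the gap (a, b) is mapped back into [σb, σa],
   which gives (1) and (2).  A point of E(a, b) whose orbit never meets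
   [σb, σa] is constant, and otherwise it is constant up to its first visit,
   after which it lies in K(σb, σa).  So every word of length n of E(a, b) is
   a constant block followed by a word of K(σb, σa), whence
   #B_n(K) <= #B_n(E) <= 2 (n+1) (#B_n(K) + 1), and this polynomial factor
   does not affect the entropy. *)

Local Notation σ := lshift_seq.

Lemma iter_lshiftE n (x : bitseqN) i : iter n σ x i = x (n + i)%N.
Proof. by elim: n i => [|n IH] i //=; rewrite /σ IH addnS. Qed.

Lemma eq_head_prefix k (z : bitseqN) :
  (forall i, (i.+1 < k)%N -> z i.+1 = z i) -> forall j, (j < k)%N -> z j = z 0.
Proof. by move=> step; elim=> [|j IH] // lt_jk; rewrite step // IH // ltnW. Qed.

Section LexOrder.
Implicit Types x y z : bitseqN.

Lemma lex_lt_trans x y z : lex_lt x y -> lex_lt y z -> lex_lt x z.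
Proof.
case=> k [eq_k [xk yk]] [l [eq_l [yl zl]]].
case: (ltngtP k l) => [lt_kl|lt_lk|eq_kl]; last by rewrite -eq_kl yk in yl.
- exists k; split=> [i lt_ik|]; last by rewrite xk -(eq_l _ lt_kl) yk.
  by rewrite eq_k // eq_l // (ltn_trans lt_ik lt_kl).
- exists l; split=> [i lt_il|]; last by rewrite zl (eq_k _ lt_lk) yl.
  by rewrite eq_k ?eq_l // (ltn_trans lt_il lt_lk).
Qed.

Lemma lex_le_trans x y z : lex_le x y -> lex_le y z -> lex_le x z.
Proof.
case=> [->|xy] [<-|yz]; [by left|by right|by right|].
by right; apply: lex_lt_trans xy yz.
Qed.

Lemma lex_leVgt x y : lex_le x y \/ lex_lt y x.
Proof.
case: (pselect (x = y)) => [->|neq_xy]; first by left; left.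
have /ex_minnP[k neq_k min_k] : exists i, x i != y i.
  apply: contra_notP neq_xy => no_diff; apply: funext => i.
  by apply/eqP/negPn/negP => diff_i; apply: no_diff; exists i.
have eq_k i : (i < k)%N -> x i = y i.
  by move=> lt_ik; apply/eqP; apply: contraTT lt_ik => /min_k; rewrite -leqNgt.
move: neq_k; case xk: (x k); case yk: (y k) => // _.
- by right; exists k; split=> // i /eq_k.
- by left; right; exists k.
Qed.

Lemma lex_le_head0 x y : lex_le x y -> y 0 = false -> x 0 = false.
Proof.
case=> [-> //|[[|k] [eq_k [_ yk]]] y0]; first by rewrite y0 in yk.
by rewrite eq_k.
Qed.

Lemma lex_le_head1 x y : lex_le x y -> x 0 = true -> y 0 = true.
Proof.
case=> [<- //|[[|k] [eq_k [xk _]]] x0]; first by rewrite x0 in xk.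
by rewrite -eq_k.
Qed.

Lemma lex_le_shift2 x y : x 0 = y 0 -> lex_le (σ x) (σ y) <-> lex_le x y.
Proof.
move=> eq0; split.
- case=> [eq_s|[k [eq_k [xk yk]]]].
    by left; apply: funext => -[|i] //; apply: (congr1 (fun f => f i) eq_s).
  by right; exists k.+1; split=> // -[|i] // /eq_k.
- case=> [->|[[|k] [eq_k [xk yk]]]]; first by left.
    by rewrite eq0 yk in xk.
  by right; exists k; split=> // i lt_ik; apply: (eq_k i.+1).
Qed.

Lemma lex_le_shift0 z : z 0 = false -> lex_le z (σ z).
Proof.
move=> z0; have [//|[k [eq_k [_ zk]]]] := lex_leVgt z (σ z).
have zk0 : z k = z 0 by apply: (@eq_head_prefix k.+1) => // i /eq_k.
by rewrite zk0 z0 in zk.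
Qed.

Lemma lex_le_shift1 z : z 0 = true -> lex_le (σ z) z.
Proof.
move=> z1; have [//|[k [eq_k [zk _]]]] := lex_leVgt (σ z) z.
have zk0 : z k = z 0 by apply: (@eq_head_prefix k.+1) => // i /eq_k/esym.
by rewrite zk0 z1 in zk.
Qed.

End LexOrder.

Definition outside_gap (a b z : bitseqN) := lex_le z a \/ lex_le b z.

Lemma Eset_shift a b x p : Eset a b x -> Eset a b (iter p σ x).
Proof. by move=> Ex n; rewrite -iterD; apply: Ex. Qed.

Lemma language_sub n (X Y : set bitseqN) :
  X `<=` Y -> language n X \subset language n Y.
Proof.
move=> XY; apply/fintype.subsetP => w; rewrite !inE => -[x [m [Xx xw]]].
by exists x, m; split=> //; apply: XY.
Qed.

Section Gap.
Variables a b : bitseqN.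
Hypotheses (a0 : a 0 = false) (b0 : b 0 = true).
Local Notation I := (lex_interval (σ b) (σ a)).
Local Notation K := (Kset (σ b) (σ a)).

Lemma shift_le_a z : lex_le z a -> lex_le (σ z) (σ a).
Proof. by move=> za; apply/lex_le_shift2 => //; rewrite a0 (lex_le_head0 za a0). Qed.

Lemma shift_ge_b z : lex_le b z -> lex_le (σ b) (σ z).
Proof. by move=> bz; apply/lex_le_shift2 => //; rewrite b0 (lex_le_head1 bz b0). Qed.

Lemma outside_gap_shift z : outside_gap a b z -> I z -> I (σ z).
Proof.
case=> [za|bz] [sbz zsa]; split.
- exact: lex_le_trans sbz (lex_le_shift0 (lex_le_head0 za a0)).
- exact: shift_le_a.
- exact: shift_ge_b.
- exact: lex_le_trans (lex_le_shift1 (lex_le_head1 bz b0)) zsa.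
Qed.

Lemma Fset_Kset : Fset a b = K.
Proof.
apply/seteqP; split=> x Fx n.
  case: (Fx n) => -[lo hi]; split=> //.
    exact: lex_le_trans hi (lex_le_shift0 a0).
  exact: lex_le_trans (lex_le_shift1 b0) lo.
have [lo hi] := Fx n; have [slo shi] := Fx n.+1.
case z0: (iter n σ x 0); [right | left]; split=> //.
  by apply/lex_le_shift2 => //; rewrite z0 b0.
by apply/lex_le_shift2 => //; rewrite z0 a0.
Qed.

Lemma Kset_sub_Eset : K `<=` Eset a b.
Proof. by rewrite -Fset_Kset => x Fx n; case: (Fx n) => -[]; [left | right]. Qed.

Lemma Eset_interval_sub_Kset x : Eset a b x -> I x -> K x.
Proof.
by move=> Ex Ix n; elim: n => [|n IH] //; exact: outside_gap_shift (Ex n) IH.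
Qed.

Lemma Eset_interval : Eset a b `&` I = K.
Proof.
apply/seteqP; split=> [x [Ex Ix]|x Kx]; first exact: Eset_interval_sub_Kset.
by split; [apply: Kset_sub_Eset | apply: (Kx 0)].
Qed.

Lemma Eset_shift_eq y j : Eset a b y -> ~ I (iter j.+1 σ y) -> y j.+1 = y j.
Proof.
move=> Ey notI; have yE i : y i = iter i σ y 0 by rewrite iter_lshiftE addn0.
have := Ey j.+1; rewrite !yE iterS in notI *.
case: (Ey j) => [za|bz] [sza|bsz].
- by rewrite (lex_le_head0 sza a0) (lex_le_head0 za a0).
- case: notI; split; last exact: shift_le_a.
  exact: lex_le_trans (lex_le_shift1 b0) bsz.
- case: notI; split; first exact: shift_ge_b.
  exact: lex_le_trans sza (lex_le_shift0 a0).
- by rewrite (lex_le_head1 bsz b0) (lex_le_head1 bz b0).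
Qed.

Lemma Eset_const_or_Kset y : Eset a b y ->
  (forall j, y j = y 0) \/
  exists m, (forall j, (j < m)%N -> y j = y 0) /\ K (iter m σ y).
Proof.
move=> Ey; case: (pselect (exists m, I (iter m σ y))) => [enter|never]; last first.
  left=> j; apply: (@eq_head_prefix j.+1) => // i _.
  by apply: Eset_shift_eq => // Ii; apply: never; exists i.+1.
have /ex_minnP[m /asboolP Im min_m] : exists m, `[< I (iter m σ y) >].
  by case: enter => m Im; exists m; apply/asboolP.
right; exists m; split; last exact: Eset_interval_sub_Kset (Eset_shift _ Ey) Im.
apply: eq_head_prefix => i lt_im; apply: Eset_shift_eq => // Ii.
by move: (min_m i.+1 (asboolT Ii)); rewrite leqNgt lt_im.
Qed.

Lemma Eset_window y n : Eset a b y ->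
  exists m : 'I_n.+1,
    (forall j, (j < m)%N -> y j = y 0) /\ ((m < n)%N -> K (iter m σ y)).
Proof.
move=> /Eset_const_or_Kset[const|[m [const Km]]].
  by exists ord_max; split=> [j _|]; rewrite ?ltnn.
case: (ltnP m n) => [lt_mn|le_nm].
  by exists (Ordinal (ltnW lt_mn : m < n.+1)); split.
exists ord_max; split=> [j lt_jn|]; last by rewrite ltnn.
by apply: const; apply: leq_trans lt_jn le_nm.
Qed.

Definition const_prefix_word n (d : 'I_n.+1 * bool * n.-tuple bool) : n.-tuple bool :=
  [tuple if (i < d.1.1)%N then d.1.2 else nth false d.2 (i - d.1.1) | i < n].

(* The all-false word is a dummy tail for windows that are entirely constant,
   needed because K(σb, σa) may be empty. *)
Lemma language_Eset_sub n :
  language n (Eset a b) \subset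
  @const_prefix_word n @:
    finset.setX [set: 'I_n.+1 * bool] (nseq_tuple n false |: language n K).
Proof.
apply/fintype.subsetP => w; rewrite inE => /asboolP[x [p [Ex xw]]].
set y := iter p σ x; have yw (i : 'I_n) : y i = tnth w i by rewrite /y iter_lshiftE xw.
have [m [const Km]] := Eset_window n (Eset_shift p Ex).
apply/imsetP; exists (m, y 0,
    if (m < n)%N then [tuple iter m σ y i | i < n] else nseq_tuple n false).
  rewrite !inE /=; case: ifP => [lt_mn|_]; last by rewrite eqxx.
  apply/orP; right; rewrite inE; exists (iter m σ y), 0; split; first exact: Km.
  by move=> i; rewrite tnth_mktuple.
apply: eq_from_tnth => i; rewrite tnth_mktuple -yw /=.
case: ltnP => [/const //|le_mi].
have lt_mn : (m < n)%N by apply: leq_ltn_trans le_mi (ltn_ord i).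
have lt_imn : (i - m < n)%N by apply: leq_ltn_trans (leq_subr _ _) (ltn_ord i).
by rewrite lt_mn -(tnth_nth false _ (Ordinal lt_imn)) tnth_mktuple iter_lshiftE subnKC.
Qed.

Lemma card_language_Eset n :
  (#|language n (Eset a b)| <= n.+1 * 2 * #|language n K|.+1)%N.
Proof.
apply: leq_trans (subset_leq_card (language_Eset_sub n)) _.
apply: leq_trans (leq_imset_card _ _) _.
rewrite cardsX cardsT card_prod card_ord card_bool leq_mul2l cardsU1.
by apply/orP; right; case: (_ \notin _).
Qed.

End Gap.

Section Entropy.
Local Open Scope ring_scope.
Variable R : realType.

Lemma limn_eq_subr_cvg0 (u v : nat -> R) :
  (fun n => v n - u n) @ \oo --> 0 -> limn u = limn v.
Proof.
move=> vu0; rewrite /lim /lim_in; congr get; apply: funext => l; apply: propext.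
split=> ul.
- have -> : v = (fun n => u n + (v n - u n)).
    by apply: funext => n; rewrite addrC subrK.
  by rewrite -[l]addr0; apply: cvgD.
- have -> : u = (fun n => v n - (v n - u n)).
    by apply: funext => n; rewrite opprB addrC subrK.
  by rewrite -[l]subr0; apply: cvgB.
Qed.

Lemma ln_linear_div_cvg0 : (fun n : nat => ln ((4 * n.+1)%:R : R) / n%:R) @ \oo --> 0.
Proof.
have bound n : (1 <= n)%N ->
    ln ((4 * n.+1)%:R : R) / n%:R <= 8 * Num.sqrt (n.+1%:R^-1).
  move=> n_ge1; set t := Num.sqrt (n.+1%:R : R).
  have t_gt0 : 0 < t by rewrite sqrtr_gt0 ltr0n.
  have tt : t ^+ 2 = n.+1%:R by rewrite sqr_sqrtr // ler0n.
  (* with t = sqrt (n+1): ln (4 (n+1)) = 2 ln (2 t) < 4 t and 4 t / n <= 8 / t *)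
  have ln_le : ln ((4 * n.+1)%:R : R) <= 4 * t.
    have -> : (4 * n.+1)%:R = (2 * t) ^+ 2 :> R by rewrite exprMn tt natrM -natrX.
    rewrite lnXn; last by rewrite mulr_gt0.
    have := ln_sublinear (mulr_gt0 (ltr0n R 2) t_gt0); rewrite mulr2n; lra.
  rewrite sqrtrV ?ler0n // -/t ler_pdivrMr ?ltr0n //; apply: le_trans ln_le _.
  have -> : 4 * t = 4 * t ^+ 2 * t^-1 by rewrite expr2 mulrA mulfK // gt_eqF.
  rewrite tt [in X in _ <= X]mulrAC ler_pM2r ?invr_gt0 // -!natrM ler_nat; lia.
apply: (@squeeze_cvgr _ _ _ _ (fun=> 0) (fun n => 8 * Num.sqrt (n.+1%:R^-1 : R))).
- exists 1%N => // n /= n_ge1; apply/andP; split; last exact: bound.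
  by rewrite divr_ge0 ?ler0n // ln_ge0 // ler1n muln_gt0.
- exact: cvg_cst.
- rewrite -[0 : R](mulr0 8) -sqrtr0; apply: cvgM; first exact: cvg_cst.
  exact: (cvg_comp _ _ (@cvg_harmonic R) (@sqrt_continuous R 0)).
Qed.

Lemma htop_eq_of_language_bound (X Y : set bitseqN) :
  (forall n, #|language n X| <= #|language n Y|
               <= n.+1 * 2 * #|language n X|.+1)%N ->
  htop R X = htop R Y.
Proof.
move=> bound; apply: limn_eq_subr_cvg0.
apply: (@squeeze_cvgr _ _ _ _ (fun=> 0) _ _ _ _ (cvg_cst 0) ln_linear_div_cvg0).
exists 1%N => // n /= n_ge1; rewrite -mulrBl.
have /andP[le_XY le_YX] := bound n.
set k := #|language n X| in le_XY le_YX *.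
set e := #|language n Y| in le_XY le_YX *.
have k_gt0 : 0 < (maxn 1 k)%:R :> R by rewrite ltr0n; lia.
have e_gt0 : 0 < (maxn 1 e)%:R :> R by rewrite ltr0n; lia.
have c_gt0 : 0 < (4 * n.+1)%:R :> R by rewrite ltr0n.
have le_ke : (maxn 1 k <= maxn 1 e)%N by lia.
have le_ek : (maxn 1 e <= 4 * n.+1 * maxn 1 k)%N.
  have le_kS : (k.+1 <= 2 * maxn 1 k)%N by lia.
  have : (n.+1 * 2 * k.+1 <= 4 * n.+1 * maxn 1 k)%N.
    by rewrite -mulnA [(4 * _)%N]mulnC -mulnA leq_mul2l; apply/orP; right; lia.
  have : (0 < 4 * n.+1 * maxn 1 k)%N by rewrite !muln_gt0 /=; lia.
  lia.
apply/andP; split.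
  by rewrite mulr_ge0 ?invr_ge0 ?ler0n // subr_ge0 ler_ln ?posrE // ler_nat.
apply: ler_wpM2r; first by rewrite invr_ge0 ler0n.
by rewrite lerBlDr -lnM ?posrE // ler_ln ?posrE ?mulr_gt0 // -natrM ler_nat.
Qed.

End Entropy.

Theorem mainTheorem6 (R : realType) (a b : bitseqN) :
  a 0%N = false -> b 0%N = true ->
  Fset a b = Kset (lshift_seq b) (lshift_seq a) /\
  (Eset a b `&` lex_interval (lshift_seq b) (lshift_seq a) = Fset a b /\
   Fset a b = Kset (lshift_seq b) (lshift_seq a)) /\
  htop R (Kset (lshift_seq b) (lshift_seq a)) = htop R (Eset a b).
Proof.
move=> a0 b0; have FK := Fset_Kset a0 b0.
split=> //; split; first by rewrite FK; split=> //; apply: Eset_interval.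
apply: htop_eq_of_language_bound => n.
rewrite card_language_Eset // andbT.
by apply/subset_leq_card/language_sub/Kset_sub_Eset.
Qed.
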